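(* Let $n$ be a positive integer, $f(x)\mid x^n-1$, and $p(x)\in\mathbb{F}_2[x]$ with $\gcd(p(x),x^n-1)=1$; write $p(x)^{-1}$ for the inverse of $p(x)$ modulo $x^n-1$ and $h(x)=\frac{x^n-1}{f(x)}$. Suppose $r(x),s(x),r'(x),s'(x)\in\mathbb{F}_2[x]$ satisfy $$r(x)+p(x)s(x)\equiv h(x)\pmod{x^n-1},\qquad r'(x)+p(x)^{-1}s'(x)\equiv h(x)\pmod{x^n-1},$$ and let $d$ be the minimum distance of the length-$n$ binary cyclic code generated by $h(x)$. Then the generalized bicycle code defined by $(f(x),p(x)f(x))$ has parameters $[[2n,2\deg(f(x)),d_{GB}]]$ with $$\min\Big\{\frac{(\mathrm{wt}(p)+\mathrm{wt}(p^{-1}))\,d}{m+\mathrm{wt}(p)\,\mathrm{wt}(p^{-1})},\ \frac{d}{m'}\Big\}\ \le\ d_{GB}\ \le\ \min\{\mathrm{wt}(p)+1,\ \mathrm{wt}(p^{-1})+1,\ \mathrm{wt}(s)+\mathrm{wt}(r)\},$$ where $m=\max\{\mathrm{wt}(p),\mathrm{wt}(p^{-1})\}$ and $m'$ may be taken to be either $\max\{\mathrm{wt}(r),\mathrm{wt}(s)\}$ or $\max\{\mathrm{wt}(r'),\mathrm{wt}(s')\}$. Moreover, $C_1\setminus C_2$ contains elements (non-trivial logical operators) of weights $\mathrm{wt}(p)+1$ and $\mathrm{wt}(s)+\mathrm{wt}(r)$.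
   Context: All polynomials are reduced modulo $x^n-1$ (representatives of degree $<n$) before taking weights; $\mathrm{wt}$ is the number of nonzero coefficients. The cyclic code generated by $h(x)$ is the ideal $\langle h(x)\rangle$ of $R_n=\mathbb{F}_2[x]/\langle x^n-1\rangle$, viewed in $\mathbb{F}_2^n$. The generalized bicycle (GB) code defined by $a(x),b(x)\in R_n$ is the CSS code on $2n$ qubits, vectors of $\mathbb{F}_2^{2n}$ being pairs $(u(x),v(x))$, with X-stabilizer space $C_2=\{(ca,cb):c\in R_n\}$, $C_1=\{(u,v):u b+v a=0\text{ in }R_n\}$, Z-stabilizer space $C_2'=\{(c\,b(x^{-1}),c\,a(x^{-1}))\}$ and $C_1'=\{(u,v):u\,a(x^{-1})+v\,b(x^{-1})=0\}$ ($x^{-1}=x^{n-1}$); its dimension is $\dim C_1-\dim C_2$ and its minimum distance $d_{GB}$ is the minimum Hamming weight of an element of $(C_1\setminus C_2)\cup(C_1'\setminus C_2')$. *)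

From HB Require Import structures.
From mathcomp Require Import all_boot all_order all_algebra.
Set Implicit Arguments. Unset Strict Implicit. Unset Printing Implicit Defensive.
Import GRing.Theory.
Local Open Scope ring_scope.

Definition red (n : nat) (p : {poly 'F_2}) : {poly 'F_2} := p %% ('X^n - 1).

Definition pvec (n : nat) (p : {poly 'F_2}) : 'rV['F_2]_n := poly_rV (red n p).

Definition wt (m : nat) (w : 'rV['F_2]_m) : nat := #|[set i : 'I_m | w 0 i != 0]|.

Definition wtp (n : nat) (p : {poly 'F_2}) : nat := #|[set i : 'I_n | (red n p)`_i != 0]|.

(* a(x^{-1}) in R_n, with x^{-1} = x^{n-1} *)
Definition recip (n : nat) (a : {poly 'F_2}) : {poly 'F_2} :=
  red n (\sum_(i < n) (red n a)`_i *: 'X^((n - i) %% n)).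

Definition cyclic_code (n : nat) (h : {poly 'F_2}) : {set 'rV['F_2]_n} :=
  [set pvec n (rVpoly c * h) | c : 'rV['F_2]_n].

(* X-stabilizer space C_2 and its "commutant" C_1 of the GB code (a,b) *)
Definition GB_C2 (n : nat) (a b : {poly 'F_2}) : {set 'rV['F_2]_(n + n)} :=
  [set row_mx (pvec n (rVpoly c * a)) (pvec n (rVpoly c * b)) | c : 'rV['F_2]_n].
Definition GB_C1 (n : nat) (a b : {poly 'F_2}) : {set 'rV['F_2]_(n + n)} :=
  [set w : 'rV['F_2]_(n + n) |
     red n (rVpoly (lsubmx w) * b + rVpoly (rsubmx w) * a) == 0].
(* Z-stabilizer space C_2' and C_1' *)
Definition GB_C2' (n : nat) (a b : {poly 'F_2}) : {set 'rV['F_2]_(n + n)} :=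
  [set row_mx (pvec n (rVpoly c * recip n b)) (pvec n (rVpoly c * recip n a))
  | c : 'rV['F_2]_n].
Definition GB_C1' (n : nat) (a b : {poly 'F_2}) : {set 'rV['F_2]_(n + n)} :=
  [set w : 'rV['F_2]_(n + n) |
     red n (rVpoly (lsubmx w) * recip n a + rVpoly (rsubmx w) * recip n b) == 0].

Definition dimF (m : nat) (C : {set 'rV['F_2]_m}) : nat := \dim <<enum C>>%VS.

(* minimum weight of a set of vectors (m.+1 if the set is empty) *)
Definition minwt (m : nat) (S : {set 'rV['F_2]_m}) : nat :=
  \big[minn/m.+1]_(w in S) wt w.

Definition mindist (m : nat) (C : {set 'rV['F_2]_m}) : nat := minwt (C :\ 0).

Definition GB_dim (n : nat) (a b : {poly 'F_2}) : nat :=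
  (dimF (GB_C1 n a b) - dimF (GB_C2 n a b))%N.
Definition GB_dist (n : nat) (a b : {poly 'F_2}) : nat :=
  minwt ((GB_C1 n a b :\: GB_C2 n a b) :|: (GB_C1' n a b :\: GB_C2' n a b)).

(** A pair (u, v) lies in C1 iff f (u p + v) = 0 in R_n, i.e. iff h divides w := u p + v.
    If w <> 0, then w and w p^{-1} = u + v p^{-1} are nonzero codewords of <h>, so
    d <= wt(u) wt(p) + wt(v) and d <= wt(v) wt(p^{-1}) + wt(u); adding these with weights
    wt(p^{-1}) and wt(p) gives the first lower bound.  If w = 0, then v = u p, and
    (u, v) \notin C2 forces u h <> 0; then u h = u r + v s and v h = v r' + u s' are nonzero
    codewords, which gives the second one.  The map (u, v) |-> (v(x^{-1}), u(x^{-1})) preserves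
    weight and sends C1' \ C2' into C1 \ C2, so d_GB is a minimum over C1 \ C2 alone.  The
    dimension is a rank-nullity count, the kernel of multiplication by f being h R_n, of
    dimension deg f; the upper bounds are the weights of the logical operators (1, p),
    (p^{-1}, 1) and (s, r). *)

From HB Require Import structures.
From mathcomp Require Import all_boot all_order all_algebra.
From mathcomp Require Import zify ring.
Import GRing.Theory Num.Theory Order.TTheory.
Local Open Scope ring_scope.

Lemma addrr_F2poly (q : {poly 'F_2}) : q + q = 0.
Proof. by apply: addrr_pchar2; rewrite pchar_poly pchar_Fp. Qed.

Section Reduction.

Context {n : nat}.
Implicit Types a b c q : {poly 'F_2}.

Lemma redD a b : red n (a + b) = red n a + red n b. Proof. exact: modpD. Qed.
Lemma redZ k a : red n (k *: a) = k *: red n a. Proof. exact: modpZl. Qed.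
Lemma red0 : red n 0 = 0. Proof. exact: mod0p. Qed.
Lemma red_id a : red n (red n a) = red n a. Proof. exact: modp_id. Qed.
Lemma redMr a b : red n (a * red n b) = red n (a * b). Proof. exact: modp_mul. Qed.
Lemma redMl a b : red n (red n a * b) = red n (a * b).
Proof. by rewrite mulrC redMr mulrC. Qed.
Lemma red_eq0 a : (red n a == 0) = ('X^n - 1 %| a).
Proof. exact/eqP/modp_eq0P. Qed.
Lemma red_sum (I : Type) (r : seq I) (F : I -> {poly 'F_2}) :
  red n (\sum_(i <- r) F i) = \sum_(i <- r) red n (F i).
Proof. exact: (big_morph _ redD red0). Qed.

Lemma red_congrMr a {b c} : red n b = red n c -> red n (a * b) = red n (a * c).
Proof. by move=> bc; rewrite -redMr bc redMr. Qed.
Lemma red_congrMl a {b c} : red n b = red n c -> red n (b * a) = red n (c * a).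
Proof. by move=> bc; rewrite -redMl bc redMl. Qed.

Lemma red_mul_invK a {q q'} : red n (q * q') = 1 -> red n (a * q * q') = red n a.
Proof. by move=> qq'; rewrite -mulrA -redMr qq' mulr1. Qed.

Lemma red_exp a k : red n (a ^+ k) = red n (red n a ^+ k).
Proof.
elim: k => [|k IHk]; first by rewrite !expr0.
by rewrite !exprS -redMr IHk redMr redMl.
Qed.

Lemma dvdp_red {f} a : f %| 'X^n - 1 -> (f %| red n a) = (f %| a).
Proof. by move=> fXn; rewrite -dvdp_mod. Qed.

Hypothesis n_gt0 : (0 < n)%N.

Lemma Xn_sub1_neq0 : 'X^n - 1 != 0 :> {poly 'F_2}.
Proof. by rewrite -size_poly_eq0 size_XnsubC. Qed.

Lemma size_red a : (size (red n a) <= n)%N.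
Proof. by have := ltn_modp a ('X^n - 1); rewrite size_XnsubC // Xn_sub1_neq0. Qed.

Lemma red_small a : (size a <= n)%N -> red n a = a.
Proof. by move=> sa; apply: modp_small; rewrite size_XnsubC. Qed.

Lemma red1 : red n 1 = 1.
Proof. by rewrite red_small // size_poly1. Qed.

Lemma redXn j : red n 'X^j = 'X^(j %% n).
Proof.
have Xn1 : red n 'X^n = 1.
  have /eqP Xn1_0 : red n ('X^n - 1) == 0 by rewrite red_eq0.
  by rewrite -[X in red n X](subrK 1) redD Xn1_0 add0r red1.
rewrite {1}(divn_eq j n) exprD mulnC exprM -redMl red_exp Xn1 expr1n red1 mul1r.
by rewrite red_small // size_polyXn ltn_pmod.
Qed.

End Reduction.

Lemma sumr_neq0_exists (V : nmodType) (I : finType) (P : pred I) (F : I -> V) :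
  \sum_(i | P i) F i != 0 -> exists2 i, P i & F i != 0.
Proof.
move=> sF; apply/exists_inP; apply: contraNT sF => /exists_inPn F0.
by rewrite big1 // => i /F0 /negPn /eqP.
Qed.

Lemma size_rVpoly {R : nzRingType} {m} (v : 'rV[R]_m) : (size (rVpoly v) <= m)%N.
Proof. exact: size_poly. Qed.

Lemma wt_row_mx m1 m2 (x : 'rV['F_2]_m1) (y : 'rV['F_2]_m2) :
  wt (row_mx x y) = (wt x + wt y)%N.
Proof.
rewrite /wt -!sum1dep_card big_split_ord /=.
by congr (_ + _)%N; apply: eq_bigl => i; rewrite ?row_mxEl ?row_mxEr.
Qed.

Section Weight.

Context {n : nat}.
Hypothesis n_gt0 : (0 < n)%N.
Implicit Types a b q : {poly 'F_2}.

Lemma coef_red_neq0 q k : (red n q)`_k != 0 -> exists2 j, q`_j != 0 & (j %% n)%N = k.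
Proof.
rewrite -[q in red n q]coefK poly_def red_sum.
under eq_bigr => j _ do rewrite redZ redXn //.
by rewrite coef_sumMXn => /sumr_neq0_exists [j /eqP <-]; exists j.
Qed.

Lemma wtp_congr {a b} : red n a = red n b -> wtp n a = wtp n b.
Proof. by rewrite /wtp => ->. Qed.

Lemma wtp_red a : wtp n (red n a) = wtp n a.
Proof. by apply: wtp_congr; rewrite red_id. Qed.

Lemma wtpD a b : (wtp n (a + b) <= wtp n a + wtp n b)%N.
Proof.
apply: leq_trans (leq_card_setU _ _).1; apply: subset_leq_card.
apply/subsetP => i; rewrite !inE redD coefD.
case: ((red n a)`_i =P 0) => [->|/eqP ai _]; last by apply/orP; left.
by rewrite add0r => ->; rewrite orbT.
Qed.

Lemma wtpM a b : (wtp n (a * b) <= wtp n a * wtp n b)%N.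
Proof.
rewrite /wtp -cardsX.
pose add (ij : 'I_n * 'I_n) : 'I_n := Ordinal (ltn_pmod (ij.1 + ij.2) n_gt0).
apply: leq_trans (leq_imset_card add _); apply: subset_leq_card.
apply/subsetP => k; rewrite inE -redMl -redMr => /coef_red_neq0 [j].
rewrite coefM => /sumr_neq0_exists [i _ /= abi] jk.
have ai : (red n a)`_i != 0 by apply: contraNneq abi => ->; rewrite mul0r.
have bi : (red n b)`_(j - i) != 0 by apply: contraNneq abi => ->; rewrite mulr0.
have in_n q' l : (red n q')`_l != 0 -> (l < n)%N.
  move=> ql; apply: leq_trans _ (size_red n_gt0 q').
  by rewrite ltnNge; apply: contra ql => sl; rewrite nth_default.
apply/imsetP; exists (Ordinal (in_n _ _ ai), Ordinal (in_n _ _ bi)).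
  by rewrite !inE ai bi.
by apply: val_inj; rewrite /= subnKC // -ltnS.
Qed.

Lemma wtp1 : wtp n 1 = 1%N.
Proof.
rewrite /wtp red1 // (_ : [set _ | _] = [set Ordinal n_gt0]) ?cards1 //.
by apply/setP => -[[|i] ?]; rewrite !inE coef1 ?oner_neq0.
Qed.

Lemma rVpoly_pvec q : rVpoly (pvec n q) = red n q.
Proof. by rewrite poly_rV_K // size_red. Qed.

Lemma pvec_rVpoly (v : 'rV['F_2]_n) : pvec n (rVpoly v) = v.
Proof. by rewrite /pvec red_small ?size_rVpoly // rVpolyK. Qed.

Lemma pvec_congr {a b} : red n a = red n b -> pvec n a = pvec n b.
Proof. by rewrite /pvec => ->. Qed.

Lemma pvec_inj_red {a b} : pvec n a = pvec n b -> red n a = red n b.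
Proof. by move=> /(congr1 rVpoly); rewrite !rVpoly_pvec. Qed.

Lemma pvec_eq0 q : (pvec n q == 0) = (red n q == 0).
Proof. by rewrite -(inj_eq (can_inj rVpolyK)) rVpoly_pvec linear0. Qed.

Lemma pvecD a b : pvec n (a + b) = pvec n a + pvec n b.
Proof. by rewrite /pvec redD linearD. Qed.

Lemma pvecZ k a : pvec n (k *: a) = k *: pvec n a.
Proof. by rewrite /pvec redZ linearZ. Qed.

Lemma wt_pvec q : wt (pvec n q) = wtp n q.
Proof. by apply: eq_card => i; rewrite !inE mxE. Qed.

Lemma wt_row_pvec u v :
  wt (row_mx (pvec n u) (pvec n v)) = (wtp n u + wtp n v)%N.
Proof. by rewrite wt_row_mx !wt_pvec. Qed.

Lemma row_pvecP (w : 'rV['F_2]_(n + n)) :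
  exists u v, w = row_mx (pvec n u) (pvec n v).
Proof.
by exists (rVpoly (lsubmx w)), (rVpoly (rsubmx w)); rewrite !pvec_rVpoly hsubmxK.
Qed.

End Weight.

Section Reciprocal.

Context {n : nat}.
Hypothesis n_gt0 : (0 < n)%N.
Implicit Types a b q : {poly 'F_2}.

Lemma modn_predn_mul i : (i <= n)%N -> n.-1 * i = n - i %[mod n].
Proof.
move=> le_i_n; apply/eqP; rewrite -(eqn_modDr i) subnK // -mulSnr prednK //.
by rewrite modnMr modnn.
Qed.

Lemma red_compXn a k :
  red n (a \Po 'X^k) = \sum_(i < size a) a`_i *: 'X^(k * i %% n).
Proof.
by rewrite comp_polyE red_sum; apply: eq_bigr => i _; rewrite redZ -exprM redXn.
Qed.

Lemma red_compXn_mod a k1 k2 : k1 = k2 %[mod n] ->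
  red n (a \Po 'X^k1) = red n (a \Po 'X^k2).
Proof.
move=> k12; rewrite !red_compXn; apply: eq_bigr => i _.
by rewrite -modnMml k12 modnMml.
Qed.

Lemma red_comp_red a k : red n (red n a \Po 'X^k) = red n (a \Po 'X^k).
Proof.
have XnE : red n (('X^n - 1) \Po 'X^k) = 0.
  rewrite comp_polyB comp_Xn_poly -exprM -polyC1 comp_polyC polyC1.
  by apply/eqP; rewrite red_eq0 mulnC exprM (subrX1 'X^n) dvdp_mulIl.
rewrite [in RHS](divp_eq a ('X^n - 1)) comp_polyD redD comp_polyM -redMr XnE.
by rewrite mulr0 red0 add0r.
Qed.

Lemma recip_red a : recip n (red n a) = recip n a.
Proof. by rewrite /recip red_id. Qed.

Lemma red_recip a : red n (recip n a) = recip n a.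
Proof. exact: red_id. Qed.

Lemma recip_sum a : recip n a = \sum_(i < n) (red n a)`_i *: 'X^((n - i) %% n).
Proof.
by rewrite /recip red_sum; apply: eq_bigr => i _; rewrite redZ redXn // modn_mod.
Qed.

Lemma recipE a : recip n a = red n (a \Po 'X^(n.-1)).
Proof.
rewrite recip_sum -red_comp_red red_compXn.
rewrite (big_ord_widen n (fun i => (red n a)`_i *: 'X^(n.-1 * i %% n)) (size_red n_gt0 a)).
rewrite [RHS]big_mkcond /=.
apply: eq_bigr => i _; case: ltnP => [_|/(nth_default 0) ->]; last by rewrite scale0r.
by rewrite modn_predn_mul // ltnW.
Qed.

Lemma recipD a b : recip n (a + b) = recip n a + recip n b.
Proof. by rewrite !recipE comp_polyD redD. Qed.

Lemma recipM a b : recip n (a * b) = red n (recip n a * recip n b).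
Proof. by rewrite !recipE comp_polyM redMl redMr. Qed.

Lemma recipK a : recip n (recip n a) = red n a.
Proof.
rewrite recipE [recip n a]recipE red_comp_red -comp_polyA comp_Xn_poly -exprM.
rewrite (red_compXn_mod _ _ _ (modn_predn_mul _ (leq_pred n))).
by rewrite (_ : n - n.-1 = 1)%N ?expr1 ?comp_polyXr //; lia.
Qed.

Lemma recip_eq0 a : (recip n a == 0) = (red n a == 0).
Proof.
have recip0 : recip n 0 = 0 by rewrite recipE comp_poly0 red0.
apply/eqP/eqP => ra0; first by rewrite -recipK ra0 recip0.
by rewrite -recip_red ra0 recip0.
Qed.

Lemma wtp_recip a : wtp n (recip n a) = wtp n a.
Proof.
have le_wtp_recip b : (wtp n (recip n b) <= wtp n b)%N.
  rewrite /wtp red_recip.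
  pose opp (i : 'I_n) : 'I_n := Ordinal (ltn_pmod (n - i) n_gt0).
  apply: leq_trans (leq_imset_card opp _); apply: subset_leq_card.
  apply/subsetP => k.
  rewrite inE recip_sum coef_sumMXn => /sumr_neq0_exists [i /eqP ik bi].
  by apply/imsetP; exists i; rewrite ?inE //; apply: val_inj.
by apply/eqP; rewrite eqn_leq le_wtp_recip -wtp_red -recipK le_wtp_recip.
Qed.

End Reciprocal.

Section MinWeight.

Context {m : nat}.
Implicit Types S T : {set 'rV['F_2]_m}.

Lemma minwt_le {S w} : w \in S -> (minwt S <= wt w)%N.
Proof. by move=> wS; rewrite /minwt -minEnat -leEnat; apply: bigmin_le_cond. Qed.

Lemma minwt_attained {S w0} : w0 \in S -> exists2 w, w \in S & minwt S = wt w.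
Proof.
move=> w0S; have wt_le (w : 'rV_m) : (wt w <= m.+1)%N.
  by apply: leqW; apply: leq_trans (max_card _) _; rewrite card_ord.
rewrite /minwt -minEnat.
have [w wS ->] := eq_bigmin (x := m.+1) w0 (mem S) (@wt m) w0S (fun w _ => wt_le w).
by exists w.
Qed.

Lemma leq_minwt S T : (forall w, w \in S -> exists2 w', w' \in T & (wt w' <= wt w)%N) ->
  (minwt T <= minwt S)%N.
Proof.
move=> ST; rewrite {2}/minwt -minEnat -leEnat; apply/bigmin_geP; split.
  by rewrite /minwt -minEnat; apply: bigmin_le_id.
by move=> w /ST [w' w'T le_w'w]; rewrite leEnat (leq_trans (minwt_le w'T)).
Qed.

End MinWeight.

Section GBCode.

Context {n : nat}.
Hypothesis n_gt0 : (0 < n)%N.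
Implicit Types a b c u v : {poly 'F_2}.

Lemma mem_GB_C1 a b u v :
  (row_mx (pvec n u) (pvec n v) \in GB_C1 n a b) = (red n (u * b + v * a) == 0).
Proof. by rewrite inE row_mxKl row_mxKr !rVpoly_pvec // !redD !redMl. Qed.

Lemma mem_GB_C2 a b u v :
  (row_mx (pvec n u) (pvec n v) \in GB_C2 n a b) <->
  exists c, red n (c * a) = red n u /\ red n (c * b) = red n v.
Proof.
split=> [/imsetP [c _ /eq_row_mx [cu cv]] | [c [ca cb]]].
  by exists (rVpoly c); split; apply/esym/(pvec_inj_red n_gt0).
apply/imsetP; exists (pvec n c) => //; rewrite rVpoly_pvec //.
by congr row_mx; apply: pvec_congr; rewrite redMl.
Qed.

Lemma GB_C1'E a b : GB_C1' n a b = GB_C1 n (recip n b) (recip n a).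
Proof. by []. Qed.

Lemma GB_C2'E a b : GB_C2' n a b = GB_C2 n (recip n b) (recip n a).
Proof. by []. Qed.

Lemma GB_C1'_flip a b u v : row_mx (pvec n u) (pvec n v) \in GB_C1' n a b ->
  row_mx (pvec n (recip n v)) (pvec n (recip n u)) \in GB_C1 n a b.
Proof.
rewrite GB_C1'E !mem_GB_C1 -recip_eq0 // recipD // !recipM // !recipK //.
by rewrite !redMr redD addrC.
Qed.

Lemma GB_C2_flip a b u v :
  row_mx (pvec n (recip n v)) (pvec n (recip n u)) \in GB_C2 n a b ->
  row_mx (pvec n u) (pvec n v) \in GB_C2' n a b.
Proof.
rewrite GB_C2'E !mem_GB_C2 => -[c [cav cbu]]; exists (recip n c).
by split; rewrite -recipM // -recip_red ?cbu ?cav recip_red recipK.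
Qed.

Lemma GB_dist_C1 a b : GB_dist n a b = minwt (GB_C1 n a b :\: GB_C2 n a b).
Proof.
apply/eqP; rewrite eqn_leq; apply/andP; split; apply: leq_minwt => w.
  by move=> wC; exists w; rewrite // inE wC.
case/setUP => [wC|]; first by exists w.
have [u [v ->]] := row_pvecP n_gt0 w; case/setDP => C1w C2w.
exists (row_mx (pvec n (recip n v)) (pvec n (recip n u))).
  by rewrite inE GB_C1'_flip // andbT; move: C2w; apply: contraNN; apply: GB_C2_flip.
by rewrite !wt_row_pvec // !wtp_recip // addnC.
Qed.

End GBCode.

Lemma mindist_le_wtp {n} {h w : {poly 'F_2}} : (0 < n)%N -> h %| w -> red n w != 0 ->
  (mindist (cyclic_code n h) <= wtp n w)%N.
Proof.
move=> n_gt0 hw w0; rewrite /mindist -wt_pvec; apply: minwt_le.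
rewrite !inE pvec_eq0 // w0; apply/imsetP; exists (pvec n (w %/ h)) => //.
by apply: pvec_congr; rewrite rVpoly_pvec // redMl divpK.
Qed.

Section Cofactor.

Context {n : nat}.
Hypothesis n_gt0 : (0 < n)%N.
Context {f : {poly 'F_2}}.
Hypothesis f_dvd : f %| 'X^n - 1.
Local Notation h := (('X^n - 1) %/ f).
Implicit Types g w : {poly 'F_2}.

Lemma cofactorK : h * f = 'X^n - 1.
Proof. exact: divpK. Qed.

Lemma cofactor_dvd : h %| 'X^n - 1.
Proof. by rewrite -{2}cofactorK dvdp_mulr. Qed.

Lemma factor_neq0 : f != 0.
Proof. by apply: contraTneq f_dvd => ->; rewrite dvd0p Xn_sub1_neq0. Qed.

Lemma cofactor_neq0 : h != 0.
Proof.
by apply: contraTneq (Xn_sub1_neq0 n_gt0) => h0; rewrite -cofactorK h0 mul0r eqxx.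
Qed.

Lemma size_cofactor : (size h + (size f).-1 = n.+1)%N.
Proof.
have := size_mul cofactor_neq0 factor_neq0; rewrite cofactorK size_XnsubC //.
by have := factor_neq0; rewrite -size_poly_gt0; case: (size f) => // k _ ->; rewrite addnS.
Qed.

Lemma deg_factor_le : ((size f).-1 <= n)%N.
Proof.
by have := size_cofactor; have := cofactor_neq0; rewrite -size_poly_gt0; lia.
Qed.

Lemma red_cofactor_neq0 : (1 < size f)%N -> red n h != 0.
Proof.
move=> f_size; rewrite red_small ?cofactor_neq0 //.
(* Naming [size h] first makes [lia] see its occurrences, which differ in their
   canonical-instance paths, as a single atom. *)
by have := size_cofactor; set s := size h; lia.
Qed.

Lemma size_mul_cofactor g : (size g <= (size f).-1)%N -> (size (g * h)%R <= n)%N.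
Proof.
move=> sg; apply: leq_trans (size_polyMleq _ _) _.
by have := size_cofactor; set s := size h; set k := (size f).-1; lia.
Qed.

Lemma size_divp_cofactor w : (size w <= n)%N -> (size (w %/ h)%R <= (size f).-1)%N.
Proof.
move=> sw; rewrite size_divp ?cofactor_neq0 //.
by have := size_cofactor; set s := size h; set k := (size f).-1; set t := size w; lia.
Qed.

Lemma red_mul_eq0 w : (red n (f * w) == 0) = (h %| w).
Proof. by rewrite red_eq0 -{1}cofactorK [f * w]mulrC dvdp_mul2r // factor_neq0. Qed.

Lemma red_cofactor_mul_eq0 w : (red n (h * w) == 0) = (f %| w).
Proof.
by rewrite red_eq0 -{1}cofactorK mulrC [h * w]mulrC dvdp_mul2r // cofactor_neq0.
Qed.

End Cofactor.

Definition mul_rV {m} n (q : {poly 'F_2}) (c : 'rV['F_2]_m) : 'rV['F_2]_n :=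
  pvec n (rVpoly c * q).

Lemma mul_rV_is_linear m n q : linear (@mul_rV m n q).
Proof. by move=> k x y; rewrite /mul_rV linearP mulrDl -scalerAl pvecD pvecZ. Qed.
HB.instance Definition _ m n q :=
  GRing.isLinear.Build 'F_2 'rV['F_2]_m 'rV['F_2]_n *:%R (@mul_rV m n q)
    (mul_rV_is_linear m n q).

Definition GB_encode n (a b : {poly 'F_2}) (c : 'rV['F_2]_n) : 'rV['F_2]_(n + n) :=
  row_mx (mul_rV n a c) (mul_rV n b c).

Lemma GB_encode_is_linear n a b : linear (GB_encode n a b).
Proof. by move=> k x y; rewrite /GB_encode !linearP scale_row_mx add_row_mx. Qed.
HB.instance Definition _ n a b :=
  GRing.isLinear.Build 'F_2 'rV['F_2]_n 'rV['F_2]_(n + n) *:%R (GB_encode n a b)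
    (GB_encode_is_linear n a b).

Definition GB_syndrome n (a b : {poly 'F_2}) (w : 'rV['F_2]_(n + n)) : 'rV['F_2]_n :=
  mul_rV n b (lsubmx w) + mul_rV n a (rsubmx w).

Lemma GB_syndrome_is_linear n a b : linear (GB_syndrome n a b).
Proof.
by move=> k x y; rewrite /GB_syndrome !linearP /= scalerDr addrACA.
Qed.
HB.instance Definition _ n a b :=
  GRing.isLinear.Build 'F_2 'rV['F_2]_(n + n) 'rV['F_2]_n *:%R (GB_syndrome n a b)
    (GB_syndrome_is_linear n a b).

Lemma dimF_vspace m (C : {set 'rV['F_2]_m}) (U : {vspace 'rV['F_2]_m}) :
  C =i U -> dimF C = \dim U.
Proof.
move=> CU; rewrite /dimF; congr (\dim _); apply/eqP; rewrite eqEsubv.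
apply/andP; split; first by apply/span_subvP => x; rewrite mem_enum CU.
by apply/subvP => x xU; apply: memv_span; rewrite mem_enum CU.
Qed.

Lemma dim_ker_img {m k} (L : 'Hom('rV['F_2]_m, 'rV['F_2]_k)) :
  (\dim (lker L) + \dim (limg L) = m)%N.
Proof.
have dim_rV : \dim {:'rV['F_2]_m} = m by rewrite dimvf /dim /= mul1n.
by rewrite -[RHS]dim_rV -(limg_ker_dim L fullv) capfv.
Qed.

Lemma dim_limg {m k} (L : 'Hom('rV['F_2]_m, 'rV['F_2]_k)) :
  \dim (limg L) = (m - \dim (lker L))%N.
Proof. by rewrite -[X in (X - _)%N](dim_ker_img L) addKn. Qed.

Lemma dim_lker {m k} (L : 'Hom('rV['F_2]_m, 'rV['F_2]_k)) :
  \dim (lker L) = (m - \dim (limg L))%N.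
Proof. by rewrite -[X in (X - _)%N](dim_ker_img L) addnK. Qed.

Section Dimension.

Context {n : nat}.
Hypothesis n_gt0 : (0 < n)%N.
Context {f : {poly 'F_2}}.
Hypothesis f_dvd : f %| 'X^n - 1.
Local Notation h := (('X^n - 1) %/ f).
Local Notation k := (size f).-1.
Local Notation mulf := (linfun (mul_rV n f : 'rV['F_2]_n -> 'rV['F_2]_n)).
Local Notation mulh := (linfun (mul_rV n h : 'rV['F_2]_k -> 'rV['F_2]_n)).

Lemma lker_mul_rV_cofactor : lker mulh = 0%VS.
Proof.
apply/eqP/lker0P => x y; rewrite !lfunE /= /mul_rV => /(pvec_inj_red n_gt0).
rewrite !red_small ?size_mul_cofactor ?size_rVpoly //.
move=> /(mulIf (cofactor_neq0 n_gt0 f_dvd)).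
by move/(congr1 (@poly_rV _ k)); rewrite !rVpolyK.
Qed.

Lemma lker_mul_rV : lker mulf = limg mulh.
Proof.
apply/vspaceP => x; rewrite memv_ker lfunE /= {1}/mul_rV.
rewrite pvec_eq0 // mulrC red_mul_eq0 //.
apply/idP/memv_imgP => [hx | [g _ ->]]; last first.
  by rewrite lfunE /= /mul_rV rVpoly_pvec // dvdp_red ?dvdp_mull ?cofactor_dvd.
exists (poly_rV (rVpoly x %/ h)); first exact: memvf.
by rewrite lfunE /= /mul_rV poly_rV_K ?divpK ?pvec_rVpoly ?size_divp_cofactor ?size_rVpoly.
Qed.

Lemma dim_lker_mul_rV : \dim (lker mulf) = k.
Proof.
rewrite lker_mul_rV limg_dim_eq; last by rewrite lker_mul_rV_cofactor capv0.
by rewrite dimvf /dim /= mul1n.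
Qed.

Lemma dim_limg_mul_rV : \dim (limg mulf) = (n - k)%N.
Proof. by rewrite dim_limg dim_lker_mul_rV. Qed.

Variable q : {poly 'F_2}.

Lemma lker_GB_encode : lker (linfun (GB_encode n f (q * f))) = lker mulf.
Proof.
(* A plain [!memv_ker] would first try, very slowly, to unify the two kernels. *)
apply/vspaceP => c; rewrite [LHS]memv_ker [RHS]memv_ker !lfunE /= row_mx_eq0.
apply/andb_idr; rewrite /mul_rV !pvec_eq0 // => /eqP cf0.
by rewrite mulrCA -redMr cf0 mulr0 red0.
Qed.

Lemma limg_GB_syndrome : limg (linfun (GB_syndrome n f (q * f))) = limg mulf.
Proof.
apply/vspaceP => x; apply/memv_imgP/memv_imgP => -[w _ ->].
  exists (pvec n (rVpoly (lsubmx w) * q + rVpoly (rsubmx w))); first exact: memvf.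
  rewrite !lfunE /= /GB_syndrome /mul_rV -pvecD; apply: pvec_congr.
  by rewrite rVpoly_pvec // redMl; congr (red n _); ring.
exists (row_mx 0 w); first exact: memvf.
by rewrite !lfunE /= /GB_syndrome row_mxKl row_mxKr linear0 add0r.
Qed.

Lemma dimF_GB_C2 : dimF (GB_C2 n f (q * f)) = (n - k)%N.
Proof.
rewrite (@dimF_vspace _ _ (limg (linfun (GB_encode n f (q * f))))).
  by rewrite dim_limg lker_GB_encode dim_lker_mul_rV.
by move=> w; apply/imsetP/memv_imgP => -[c _ ->]; exists c; rewrite ?memvf ?lfunE.
Qed.

Lemma dimF_GB_C1 : dimF (GB_C1 n f (q * f)) = (n + k)%N.
Proof.
rewrite (@dimF_vspace _ _ (lker (linfun (GB_syndrome n f (q * f))))).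
  rewrite dim_lker limg_GB_syndrome dim_limg_mul_rV.
  by rewrite subnBA ?deg_factor_le // -addnA addKn.
by move=> w; rewrite inE memv_ker lfunE /= /GB_syndrome /mul_rV -pvecD pvec_eq0.
Qed.

End Dimension.

Lemma GB_dim_factor n f q : (0 < n)%N -> f %| 'X^n - 1 ->
  GB_dim n f (q * f) = (2 * (size f).-1)%N.
Proof.
move=> n_gt0 f_dvd; rewrite /GB_dim dimF_GB_C1 // dimF_GB_C2 //.
by have := deg_factor_le n_gt0 f_dvd; set k := (size f).-1; lia.
Qed.

Section LowerBound.

Context {n : nat} {f : {poly 'F_2}}.
Hypothesis n_gt0 : (0 < n)%N.
Hypothesis f_dvd : f %| 'X^n - 1.
Local Notation h := (('X^n - 1) %/ f).
Local Notation d := (mindist (cyclic_code n h)).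
Implicit Types q r s u v w : {poly 'F_2}.

Lemma mindist_le_wtp_mul_eq0 {w} : red n (f * w) = 0 -> red n w != 0 -> (d <= wtp n w)%N.
Proof. by move=> /eqP; rewrite red_mul_eq0 //; apply: mindist_le_wtp. Qed.

Lemma mindist_le_split u v q r s : red n v = red n (u * q) -> red n (r + q * s) = red n h ->
  red n (u * h) != 0 -> (d <= wtp n u * wtp n r + wtp n v * wtp n s)%N.
Proof.
move=> vE hE uh0; have uhE : red n (u * h) = red n (u * r + v * s).
  by rewrite -redMr -hE redMr mulrDr mulrA !redD -[red n (v * s)]redMl vE redMl.
apply: leq_trans (mindist_le_wtp n_gt0 (dvdp_mull u (dvdpp h)) uh0) _.
rewrite (wtp_congr uhE); apply: leq_trans (wtpD _ _) _.
by apply: leq_add; apply: wtpM.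
Qed.

Context {p pinv : {poly 'F_2}}.
Hypothesis p_pinv : red n (p * pinv) = 1.

Lemma GB_C1_weight_bound {u v r s r' s'} :
  red n (r + p * s) = red n h -> red n (r' + pinv * s') = red n h ->
  row_mx (pvec n u) (pvec n v) \in GB_C1 n f (p * f) :\: GB_C2 n f (p * f) ->
  (d <= wtp n u * wtp n p + wtp n v)%N /\ (d <= wtp n v * wtp n pinv + wtp n u)%N \/
  (d <= wtp n u * wtp n r + wtp n v * wtp n s)%N /\
  (d <= wtp n v * wtp n r' + wtp n u * wtp n s')%N.
Proof.
move=> hE hE' /setDP []; rewrite mem_GB_C1 // => /eqP C1uv C2uv.
have pinv_p : red n (pinv * p) = 1 by rewrite mulrC.
have fw0 : red n (f * (u * p + v)) = 0 by rewrite -C1uv; congr (red n _); ring.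
have [w0 | w_neq0] := eqVneq (red n (u * p + v)) 0; [right | left].
  have vE : red n v = red n (u * p).
    by rewrite -[v]add0r -(addrr_F2poly (u * p)) -addrA redD w0 addr0.
  have uE : red n u = red n (v * pinv) by rewrite -redMl vE redMl red_mul_invK.
  have uh0 : red n (u * h) != 0.
    apply: contra C2uv; rewrite mulrC red_cofactor_mul_eq0 // => fu.
    apply/mem_GB_C2 => //; exists (u %/ f); rewrite divpK //.
    by rewrite mulrCA divpK // mulrC vE.
  have vh0 : red n (v * h) != 0.
    apply: contraNneq uh0 => vh0; rewrite -(red_mul_invK (u * h) p_pinv).
    by rewrite [u * h * p]mulrAC -redMl (red_congrMl h (esym vE)) vh0 mul0r red0.
  by split; [apply: mindist_le_split vE hE uh0 | apply: mindist_le_split uE hE' vh0].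
split.
  apply: leq_trans (mindist_le_wtp_mul_eq0 fw0 w_neq0) _.
  by apply: leq_trans (wtpD _ _) _; rewrite leq_add2r wtpM.
have fw'0 : red n (f * ((u * p + v) * pinv)) = 0 by rewrite mulrA -redMl fw0 mul0r red0.
have w'_neq0 : red n ((u * p + v) * pinv) != 0.
  apply: contraNneq w_neq0 => w'0.
  by rewrite -(red_mul_invK _ pinv_p) -redMl w'0 mul0r red0.
apply: leq_trans (mindist_le_wtp_mul_eq0 fw'0 w'_neq0) _.
rewrite (wtp_congr (_ : _ = red n (v * pinv + u))); last first.
  by rewrite mulrDl redD [red n (v * pinv + u)]redD red_mul_invK // addrC.
by apply: leq_trans (wtpD _ _) _; rewrite leq_add2r wtpM.
Qed.

End LowerBound.

Section LogicalOperators.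

Context {n : nat} {f : {poly 'F_2}}.
Hypothesis n_gt0 : (0 < n)%N.
Hypothesis f_dvd : f %| 'X^n - 1.
Hypothesis f_size : (1 < size f)%N.
Local Notation h := (('X^n - 1) %/ f).
Implicit Types p q r s u v : {poly 'F_2}.

Lemma GB_C2_factor_dvd q u v : row_mx (pvec n u) (pvec n v) \in GB_C2 n f (q * f) ->
  (f %| u) && (f %| v).
Proof.
case/mem_GB_C2 => // c [cu cv].
rewrite -(dvdp_red u f_dvd) -(dvdp_red v f_dvd) -cu -cv.
by rewrite !(dvdp_red _ f_dvd) mulrA !dvdp_mull.
Qed.

Lemma factor_ndvd1 : ~~ (f %| 1).
Proof. by rewrite dvdp1 neq_ltn f_size orbT. Qed.

Lemma GB_logical_1p p :
  row_mx (pvec n 1) (pvec n p) \in GB_C1 n f (p * f) :\: GB_C2 n f (p * f).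
Proof.
rewrite inE mem_GB_C1 // mul1r addrr_F2poly red0 eqxx andbT.
by apply: contraNN factor_ndvd1 => /GB_C2_factor_dvd /andP [].
Qed.

Lemma GB_logical_pinv1 {p pinv} : red n (p * pinv) = 1 ->
  row_mx (pvec n pinv) (pvec n 1) \in GB_C1 n f (p * f) :\: GB_C2 n f (p * f).
Proof.
move=> p_pinv; rewrite inE mem_GB_C1 // mul1r mulrA redD -redMl (mulrC pinv) p_pinv.
rewrite mul1r -redD addrr_F2poly red0 eqxx andbT.
by apply: contraNN factor_ndvd1 => /GB_C2_factor_dvd /andP [].
Qed.

Lemma GB_logical_sr {p r s} : red n (r + p * s) = red n h ->
  row_mx (pvec n s) (pvec n r) \in GB_C1 n f (p * f) :\: GB_C2 n f (p * f).
Proof.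
move=> hE; rewrite inE mem_GB_C1 //; apply/andP; split.
  apply: contra (red_cofactor_neq0 n_gt0 f_dvd f_size) => C2.
  case/mem_GB_C2: C2 => // c [cs cr].
  by rewrite -hE redD -cr -(red_congrMr p cs) -redD mulrCA addrr_F2poly red0.
rewrite (_ : s * (p * f) + r * f = (r + p * s) * f); last by ring.
by rewrite -redMl hE redMl cofactorK // red_eq0.
Qed.

End LogicalOperators.

Section RatioBounds.

Variable R : numFieldType.
Implicit Types d x y P Q S T M : nat.

Lemma ler_nat_ratio d x M : (d <= x * M)%N -> d%:R / M%:R <= x%:R :> R.
Proof.
move=> le_d_xM; have [->|M_gt0] := posnP M; first by rewrite invr0 mulr0 ler0n.
by rewrite ler_pdivrMr ?ltr0n // -natrM ler_nat.
Qed.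

Lemma ratio_le_of_bounds d x y P Q : (d <= x * P + y)%N -> (d <= y * Q + x)%N ->
  ((P + Q) * d)%:R / (maxn P Q + P * Q)%:R <= (x + y)%:R :> R.
Proof.
move=> dP dQ; apply: ler_nat_ratio.
have := leq_maxl P Q; have := leq_maxr P Q; set m := maxn P Q; nia.
Qed.

Lemma ratio_le_of_bound d x y S T : (d <= x * S + y * T)%N ->
  d%:R / (maxn S T)%:R <= (x + y)%:R :> R.
Proof.
move=> dST; apply: ler_nat_ratio; apply: leq_trans dST _.
by rewrite mulnDl leq_add // leq_mul2l ?leq_maxl ?leq_maxr orbT.
Qed.

End RatioBounds.

Theorem theorem3 (n : nat) (f p pinv r s r' s' : {poly 'F_2}) :
  (0 < n)%N ->
  f %| 'X^n - 1 ->
  (1 < size f)%N ->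
  coprimep p ('X^n - 1) ->
  red n (p * pinv) = 1 ->
  let h := ('X^n - 1) %/ f in
  red n (r + p * s) = red n h ->
  red n (r' + pinv * s') = red n h ->
  let d := mindist (cyclic_code n h) in
  let a := f in
  let b := p * f in
  let dGB := GB_dist n a b in
  let m := maxn (wtp n p) (wtp n pinv) in
  let lb (m' : nat) : rat :=
    Num.min (((wtp n p + wtp n pinv) * d)%:R / (m + wtp n p * wtp n pinv)%:R)
            (d%:R / m'%:R) in
  [/\ GB_dim n a b = (2 * (size f).-1)%N,
      lb (maxn (wtp n r) (wtp n s)) <= dGB%:R,
      lb (maxn (wtp n r') (wtp n s')) <= dGB%:R,
      (dGB <= minn (wtp n p).+1 (minn (wtp n pinv).+1 (wtp n s + wtp n r)))%N &
      (exists2 w, w \in GB_C1 n a b :\: GB_C2 n a b & wt w = (wtp n p).+1) /\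
      (exists2 w, w \in GB_C1 n a b :\: GB_C2 n a b & wt w = (wtp n s + wtp n r)%N)].
Proof.
move=> n_gt0 f_dvd f_size _ p_pinv h hE hE' d a b dGB m lb.
have e1 := GB_logical_1p n_gt0 f_dvd f_size p.
have e2 := GB_logical_sr n_gt0 f_dvd f_size hE.
have e3 := GB_logical_pinv1 n_gt0 f_dvd f_size p_pinv.
have e1w : wt (row_mx (pvec n 1) (pvec n p)) = (wtp n p).+1.
  by rewrite wt_row_pvec // wtp1.
have e2w : wt (row_mx (pvec n s) (pvec n r)) = (wtp n s + wtp n r)%N.
  exact: wt_row_pvec.
have e3w : wt (row_mx (pvec n pinv) (pvec n 1)) = (wtp n pinv).+1.
  by rewrite wt_row_pvec // wtp1 // addn1.
have dGBE : dGB = minwt (GB_C1 n a b :\: GB_C2 n a b) by apply: GB_dist_C1.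
have [w C1w] := minwt_attained e1; have [u [v wE]] := row_pvecP n_gt0 w; subst w.
rewrite wt_row_pvec // -dGBE => dGB_uv.
have bound := GB_C1_weight_bound n_gt0 f_dvd p_pinv hE hE' C1w.
split.
- exact: GB_dim_factor.
- rewrite dGB_uv ge_min; case: bound => [[dp dpinv] | [drs _]].
    by rewrite ratio_le_of_bounds.
  by rewrite ratio_le_of_bound ?orbT.
- rewrite dGB_uv ge_min; case: bound => [[dp dpinv] | [_ drs]].
    by rewrite ratio_le_of_bounds.
  by rewrite [(wtp n u + _)%N]addnC ratio_le_of_bound ?orbT.
- by rewrite dGBE !leq_min -e1w -e2w -e3w !minwt_le.
- by split; [exists (row_mx (pvec n 1) (pvec n p)) | exists (row_mx (pvec n s) (pvec n r))].
Qed.
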